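(* Let $U$ and $X$ be compact metric spaces, let $T:U\to U$ be a surjective map (not necessarily continuous), and let $g:U\times X\to X$ be a continuous driven system which is SI-invertible. Let $Y_T\subset X\times X$ be the relation induced by $(U,T)$. Then there exists a well-defined map $G_T:Y_T\to Y_T$ such that for every orbit $\bar u=\{u_k\}_{k\in\mathbb Z}$ of $T$, every solution $\{x_k\}_{k\in\mathbb Z}$ of $g$ for the input $\bar u$, and every $n\in\mathbb Z$, $$G_T(x_{n-1},x_n)=(x_n,x_{n+1}).$$
   Context: An orbit of $T$ is a bi-infinite sequence $\{u_n\}_{n\in\mathbb Z}\subset U$ with $u_{n+1}=Tu_n$ for all $n\in\mathbb Z$. A driven system is a continuous map $g:U\times X\to X$ with $U,X$ compact metric spaces. Given a bi-infinite input $\bar u=\{u_n\}_{n\in\mathbb Z}\subset U$, a solution of $g$ for $\bar u$ is a bi-infinite sequence $\{x_n\}_{n\in\mathbb Z}\subset X$ with $x_{n+1}=g(u_n,x_n)$ for all $n\in\mathbb Z$. The driven system $g$ is SI-invertible (state-input invertible) if for every $x\in X$ the map $g(\cdot,x):U\to X$ is injective, i.e. whenever $x_{n+1}=g(u_n,x_n)$, the input $u_n$ is uniquely determined by $x_n$ and $x_{n+1}$. The relation induced by $(U,T)$ is $$Y_T:=\{(x_{n-1},x_n): \{x_k\}_{k\in\mathbb Z}\text{ is a solution of }g\text{ for some orbit of }T,\ n\in\mathbb Z\}.$$ *)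

From HB Require Import structures.
From mathcomp Require Import all_boot all_order all_algebra.
From mathcomp Require Import all_classical all_reals all_analysis.
Set Implicit Arguments. Unset Strict Implicit. Unset Printing Implicit Defensive.
Local Open Scope classical_set_scope.

Definition is_orbit {U : Type} (T : U -> U) (u : int -> U) : Prop :=
  forall n : int, u (n + 1)%R = T (u n).

Definition is_solution {U X : Type} (g : U * X -> X) (u : int -> U) (x : int -> X) : Prop :=
  forall n : int, x (n + 1)%R = g (u n, x n).

Definition SI_invertible {U X : Type} (g : U * X -> X) : Prop :=
  forall x : X, injective (fun u : U => g (u, x)).

Definition induced_relation {U X : Type} (T : U -> U) (g : U * X -> X) : set (X * X) :=
  [set p | exists u x n, is_orbit T u /\ is_solution g u x /\ p = (x (n - 1)%R, x n)].

From HB Require Import structures.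
From mathcomp Require Import all_boot all_order all_algebra.
From mathcomp Require Import all_classical all_reals all_analysis.
Set Implicit Arguments. Unset Strict Implicit.
Import GRing.Theory.
Local Open Scope classical_set_scope.

(* Only SI-invertibility matters: along a solution, the pair (x_{n-1}, x_n)
   determines the input u_{n-1}, hence u_n = T u_{n-1} and x_{n+1} = g(u_n, x_n).
   So "(x_{n-1}, x_n) is followed by (x_n, x_{n+1})" is a functional relation on
   Y_T, and any choice of a function extending it is G_T. *)

Lemma functional_relation_extends {A : Type} (r : A -> A -> Prop) :
  (forall p q q', r p q -> r p q' -> q = q') ->
  exists f : A -> A, forall p q, r p q -> f p = q.
Proof.
move=> r_fun.
have [f fP] : {f : A -> A & forall p, (exists q, r p q) -> r p (f p)}.
  apply: (choice (P := fun p fp => (exists q, r p q) -> r p fp)) => p.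
  have [[q rpq]|no_q] := pselect (exists q, r p q).
  - by exists q.
  - by exists p => /no_q [].
by exists f => p q rpq; apply: r_fun (fP p (ex_intro _ q rpq)) rpq.
Qed.

Section ShiftRelation.
Variables (U X : Type) (T : U -> U) (g : U * X -> X).

Definition shift_relation (p q : X * X) : Prop :=
  exists u x (n : int), is_orbit T u /\ is_solution g u x /\
    p = (x (n - 1)%R, x n) /\ q = (x n, x (n + 1)%R).

Lemma solution_pred (u : int -> U) (x : int -> X) (n : int) :
  is_solution g u x -> x n = g (u (n - 1)%R, x (n - 1)%R).
Proof. by move=> sol; rewrite -sol subrK. Qed.

Lemma orbit_pred (u : int -> U) (n : int) :
  is_orbit T u -> u n = T (u (n - 1)%R).
Proof. by move=> orb; rewrite -orb subrK. Qed.

Hypothesis SIg : SI_invertible g.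

Lemma SI_invertible_input (u v : int -> U) (x y : int -> X) (n m : int) :
  is_solution g u x -> is_solution g v y ->
  x (n - 1)%R = y (m - 1)%R -> x n = y m -> u (n - 1)%R = v (m - 1)%R.
Proof.
move=> solx soly E1 E2; apply: (@SIg (x (n - 1)%R)) => /=.
by rewrite -solution_pred // E2 E1 -solution_pred.
Qed.

Lemma shift_relation_functional (p q q' : X * X) :
  shift_relation p q -> shift_relation p q' -> q = q'.
Proof.
move=> [u [x [n [orbu [solx [-> ->]]]]]] [v [y [m [orbv [soly [[E1 E2] ->]]]]]].
have Eu : u n = v m.
  by rewrite (orbit_pred n orbu) (orbit_pred m orbv) (SI_invertible_input solx soly E1 E2).
by rewrite solx soly Eu E2.
Qed.

End ShiftRelation.

Theorem theorem3 (R : realType) (U X : metricType R)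
  (T : U -> U) (g : U * X -> X) :
  compact [set: U] -> compact [set: X] ->
  (forall v : U, exists w : U, T w = v) -> continuous g -> SI_invertible g ->
  exists G : X * X -> X * X,
    (forall p, induced_relation T g p -> induced_relation T g (G p)) /\
    (forall (u : int -> U) (x : int -> X) (n : int),
        is_orbit T u -> is_solution g u x ->
        G (x (n - 1)%R, x n) = (x n, x (n + 1)%R)).
Proof.
move=> _ _ _ _ SIg.
have [G GP] := functional_relation_extends (@shift_relation_functional _ _ T _ SIg).
have G_shift u x n : is_orbit T u -> is_solution g u x ->
    G (x (n - 1)%R, x n) = (x n, x (n + 1)%R).
  by move=> orbu solx; apply: GP; exists u, x, n.
exists G; split=> [p [u [x [n [orbu [solx ->]]]]]|//].
rewrite (G_shift u x n orbu solx); exists u, x, (n + 1)%R.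
do 2!split=> //.
by rewrite addrK.
Qed.
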